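(* Let $d$ be a positive integer. (1) If $D=T^{2d}+T^{e}$ with $0\le e<d$, then the partial quotients $a_h$ ($h\ge0$) of the continued fraction expansion of $\sqrt D$ satisfy $\deg a_h=d$ for $h$ even and $\deg a_h=d-e$ for $h$ odd. (2) If $D=T^{2d}+T^{d}$, then all partial quotients $a_h$ ($h\ge0$) of the continued fraction expansion of $\sqrt D$ have degree $d$. Moreover, in both cases $l(\sqrt D)=d$.
   Context: $\mathbb{Q}((1/T))$ is the field of formal Laurent series $\sum_{i=-\infty}^m c_iT^i$, $c_i\in\mathbb{Q}$; $\deg$ of a nonzero series is the exponent of its leading term, $\deg 0=-\infty$. $\sqrt D\in\mathbb{Q}((1/T))$ denotes the square root $T^d(1+\dots)$ of $D$. The continued fraction expansion $[a_0,a_1,\dots]$ of $\alpha$ is given by $\alpha_0=\alpha$, $a_i=\lfloor\alpha_i\rfloor$ (the sum of the terms of nonnegative degree), $\alpha_{i+1}=(\alpha_i-a_i)^{-1}$. For $\alpha\notin\mathbb{Q}(T)$, the Lagrange constant $l(\alpha)\in\mathbb{Z}\cup\{\infty\}$ is the supremum of integers $k$ such that $\deg(\alpha-p/q)\le-2\deg q-k$ for infinitely many $p,q\in\mathbb{Q}[T]$, $q\ne0$. *)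

(* Laurent series in 1/T over Q are modelled as coefficient
   functions int -> rat (coefficient of T^i) with support bounded above. *)
From mathcomp Require Import all_boot all_order all_algebra.
From Stdlib Require Import List.
Set Implicit Arguments. Unset Strict Implicit. Unset Printing Implicit Defensive.
Import Order.TTheory GRing.Theory Num.Theory.
Local Open Scope ring_scope.

Definition laurent := int -> rat.

Definition is_laurent (c : laurent) : Prop :=
  exists m : int, forall i : int, m < i -> c i = 0.

(* deg c <= m  (holds for c = 0, whose degree is -oo) *)
Definition deg_le (c : laurent) (m : int) : Prop :=
  forall i : int, m < i -> c i = 0.

Definition polyL (p : {poly rat}) : laurent :=
  fun i => if (0 <= i) then p`_(absz i) else 0.

Definition oneL : laurent := polyL 1.

Definition subL (a b : laurent) : laurent := fun i => a i - b i.

(* c = a * b in Q((1/T)): the c_n = sum_i a_i b_(n-i), a finite sum for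
   Laurent series; expressed as the eventual value of the symmetric
   partial sums over the windows -M <= i <= M. *)
Definition is_prod (a b c : laurent) : Prop :=
  forall n : int, exists N : nat, forall M : nat, (N <= M)%N ->
    c n = \sum_(j < (2 * M).+1) a (j%:Z - M%:Z) * b (n - (j%:Z - M%:Z)).

Definition is_floor (x : laurent) (p : {poly rat}) : Prop :=
  forall i : int, 0 <= i -> x i = p`_(absz i).

Definition is_sqrt (D : {poly rat}) (d : nat) (s : laurent) : Prop :=
  is_laurent s /\ is_prod s s (polyL D) /\ s d%:Z = 1 /\ deg_le s d%:Z.

(* alpha_h and a_h = partial quotients of the continued fraction of x:
   alpha_0 = x, a_h = floor alpha_h, alpha_(h+1) = (alpha_h - a_h)^(-1) *)
Definition cf_expansion (x : laurent) (alpha : nat -> laurent)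
    (a : nat -> {poly rat}) : Prop :=
  alpha 0%N = x /\
  forall h : nat, is_laurent (alpha h) /\ is_floor (alpha h) (a h) /\
     is_prod (subL (alpha h) (polyL (a h))) (alpha h.+1) oneL.

Definition degp (q : {poly rat}) : int := ((size q).-1)%:Z.

Definition good_approx (x : laurent) (k : int) (r : laurent) : Prop :=
  is_laurent r /\
  exists p q : {poly rat}, q != 0 /\ is_prod (polyL q) r (polyL p) /\
    deg_le (subL x r) (- (2 * degp q) - k).

(* infinitely many fractions p/q satisfy the Lagrange inequality for k *)
Definition lagrange_holds (x : laurent) (k : int) : Prop :=
  ~ (exists l : list laurent, forall r, good_approx x k r -> List.In r l).

(* l(x) = k  (k is the supremum, i.e. the maximum, of admissible integers) *)
Definition lagrange_eq (x : laurent) (k : int) : Prop :=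
  lagrange_holds x k /\ forall k' : int, lagrange_holds x k' -> k' <= k.

From mathcomp Require Import all_boot all_order all_algebra.
From mathcomp Require Import zify ring lra.
From Stdlib Require Import FunctionalExtensionality Classical.
From Stdlib Require List.
Set Implicit Arguments. Unset Strict Implicit. Unset Printing Implicit Defensive.
Import Order.TTheory GRing.Theory Num.Theory.
Local Open Scope ring_scope.

(* Write A for the polynomial part of sqrt D.  In both families D - A^2 = c T^e
   with c a nonzero constant: A = T^d and c = 1 in (1), A = T^d + 1/2, c = -1/4
   and e = 0 in (2).  Hence (sqrt D - A)(sqrt D + A) = c T^e, so the first complete
   quotient is (sqrt D + A)/(c T^e), with polynomial part a_1 = 2A/(c T^e) and
   fractional part (sqrt D - A)/(c T^e), whose inverse is sqrt D + A, with
   polynomial part 2A.  The expansion is thus [A; a_1, 2A, a_1, 2A, ...].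

   If deg (sqrt D - p/q) < -2 deg q - d, then q^2 D - p^2 = (q sqrt D - p)(q sqrt D + p)
   has negative degree, so q sqrt D = +-p, which an infinite continued fraction
   excludes; hence l(sqrt D) <= d.  Conversely P = 2 T^(2d-e) + 1, Q = 2 T^(d-e)
   solve P^2 - D Q^2 = 1 with deg P = deg Q + d (for (2) take e = d), which forces
   deg (sqrt D - P/Q) = -d - 2 deg Q; the powers (P + Q sqrt D)^n give such
   fractions with deg Q arbitrarily large, hence l(sqrt D) >= d. *)

(** * Products of Laurent series *)

Definition addL (a b : laurent) : laurent := fun i => a i + b i.
Definition scaleL (k : rat) (a : laurent) : laurent := fun i => k * a i.
Definition shiftL (e : int) (a : laurent) : laurent := fun i => a (i + e).

Definition window (M : nat) : seq int := [seq j%:Z - M%:Z | j <- iota 0 (2 * M).+1].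

Lemma sum_window (F : int -> rat) M :
  \sum_(j < (2 * M).+1) F (j%:Z - M%:Z) = \sum_(i <- window M) F i.
Proof.
by rewrite /window big_map -(big_mkord xpredT (fun j : nat => F (j%:Z - M%:Z))) /index_iota subn0.
Qed.

Lemma mem_window M i : (i \in window M) = (- M%:Z <= i <= M%:Z).
Proof.
apply/mapP/idP => [[j]|/andP[H1 H2]].
  by rewrite mem_iota add0n => /andP[_ Hj] ->; apply/andP; split; lia.
exists (absz (i + M%:Z)); last by lia.
by rewrite mem_iota add0n; apply/andP; split; lia.
Qed.

Lemma window_uniq M : uniq (window M).
Proof. by rewrite map_inj_uniq ?iota_uniq // => x y /= H; lia. Qed.

Definition covers (F : int -> rat) (l : seq int) := forall i, F i != 0 -> i \in l.

Lemma eq_big_covers (F : int -> rat) l1 l2 : uniq l1 -> uniq l2 ->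
  covers F l1 -> covers F l2 -> \sum_(i <- l1) F i = \sum_(i <- l2) F i.
Proof.
move=> u1 u2 c1 c2.
have E l : \sum_(i <- l) F i = \sum_(i <- [seq i <- l | F i != 0]) F i.
  by rewrite big_filter [RHS]big_mkcond; apply: eq_bigr => i _; case: eqP.
rewrite (E l1) (E l2); apply/perm_big/uniq_perm; rewrite ?filter_uniq //.
by move=> i; rewrite !mem_filter; case H: (F i != 0); rewrite //= (c1 _ H) (c2 _ H).
Qed.

Definition conv (a b : laurent) (n : int) : int -> rat := fun i => a i * b (n - i).

Lemma is_prodE a b c : is_prod a b c <->
  forall n, exists N : nat, forall M : nat, (N <= M)%N ->
    c n = \sum_(i <- window M) conv a b n i.
Proof. by split=> H n; have [N HN] := H n; exists N => M HM; rewrite (HN M) // -sum_window. Qed.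

Lemma is_prod_uniq a b c c' : is_prod a b c -> is_prod a b c' -> c = c'.
Proof.
move=> /is_prodE H /is_prodE H'; apply: functional_extensionality => n.
have [N HN] := H n; have [N' HN'] := H' n.
by rewrite (HN (maxn N N')) ?leq_maxl // (HN' (maxn N N')) ?leq_maxr.
Qed.

Lemma is_prod_add a b c a' b' c' a2 b2 c2 :
  (forall n i, conv a2 b2 n i = conv a b n i + conv a' b' n i) ->
  (forall n, c2 n = c n + c' n) ->
  is_prod a b c -> is_prod a' b' c' -> is_prod a2 b2 c2.
Proof.
move=> Econv Ec /is_prodE H /is_prodE H'; apply/is_prodE => n.
have [N HN] := H n; have [N' HN'] := H' n; exists (maxn N N') => M HM.
rewrite Ec (HN M) ?(leq_trans (leq_maxl _ _) HM) // (HN' M) ?(leq_trans (leq_maxr _ _) HM) //.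
by rewrite -big_split; apply: eq_bigr => i _; rewrite Econv.
Qed.

Lemma is_prod_scale k a b c a' b' c' :
  (forall n i, conv a' b' n i = k * conv a b n i) -> (forall n, c' n = k * c n) ->
  is_prod a b c -> is_prod a' b' c'.
Proof.
move=> Econv Ec /is_prodE H; apply/is_prodE => n; have [N HN] := H n.
by exists N => M HM; rewrite Ec (HN M) // mulr_sumr; apply: eq_bigr => i _; rewrite Econv.
Qed.

Lemma is_prodZr k a b c : is_prod a b c -> is_prod a (scaleL k b) (scaleL k c).
Proof. by apply: is_prod_scale => [n i|n] //; rewrite /conv /scaleL mulrCA. Qed.

Lemma is_prodZl k a b c : is_prod a b c -> is_prod (scaleL k a) b (scaleL k c).
Proof. by apply: is_prod_scale => [n i|n] //; rewrite /conv /scaleL mulrA. Qed.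

Lemma is_prodDr a b b' c c' :
  is_prod a b c -> is_prod a b' c' -> is_prod a (addL b b') (addL c c').
Proof. by apply: is_prod_add => [n i|n] //; rewrite /conv /addL mulrDr. Qed.

Lemma is_prodBr a b b' c c' :
  is_prod a b c -> is_prod a b' c' -> is_prod a (subL b b') (subL c c').
Proof.
move=> H H'; apply: (is_prod_add _ _ H (is_prodZr (-1) H')) => [n i|n];
  rewrite /conv /subL /scaleL; ring.
Qed.

Lemma is_prodBl a a' b c c' :
  is_prod a b c -> is_prod a' b c' -> is_prod (subL a a') b (subL c c').
Proof.
move=> H H'; apply: (is_prod_add _ _ H (is_prodZl (-1) H')) => [n i|n];
  rewrite /conv /subL /scaleL; ring.
Qed.

Lemma is_prod_shiftr e a b c : is_prod a b c -> is_prod a (shiftL e b) (shiftL e c).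
Proof.
move=> /is_prodE H; apply/is_prodE => n; have [N HN] := H (n + e).
by exists N => M HM; rewrite /shiftL (HN M) //; apply: eq_bigr => i _; rewrite /conv addrAC.
Qed.

Lemma deg_le_trans x m m' : deg_le x m -> m <= m' -> deg_le x m'.
Proof. by move=> H Hm i Hi; apply: H; lia. Qed.

Lemma deg_leP x m i : deg_le x m -> x i != 0 -> i <= m.
Proof. by move=> H Hi; rewrite leNgt; apply: contra Hi => /H ->. Qed.

Lemma laurent_deg_le_nat x : is_laurent x -> exists m : nat, deg_le x m%:Z.
Proof. by case=> m Hm; exists (absz m); apply: (deg_le_trans Hm); lia. Qed.

Lemma conv_nz_bounds a b ma mb n i : deg_le a ma -> deg_le b mb ->
  conv a b n i != 0 -> n - mb <= i <= ma.
Proof.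
move=> Ha Hb; rewrite /conv mulf_eq0 negb_or => /andP[/(deg_leP Ha) h1 /(deg_leP Hb) h2].
by apply/andP; split; lia.
Qed.

Lemma is_prod_sum a b c ma mb n l : deg_le a ma -> deg_le b mb -> is_prod a b c ->
  uniq l -> covers (conv a b n) l -> c n = \sum_(i <- l) conv a b n i.
Proof.
move=> Ha Hb /is_prodE H ul cl; have [N HN] := H n.
set K := (absz ma + absz mb + absz n)%N.
rewrite (HN (maxn N K)) ?leq_maxl //; apply: eq_big_covers => //; first exact: window_uniq.
move=> i /(conv_nz_bounds Ha Hb) Hi; rewrite mem_window.
by have := leq_maxr N K; move: Hi; rewrite /K; lia.
Qed.

Lemma is_prod_of_sums a b c ma mb : deg_le a ma -> deg_le b mb ->
  (forall n, exists2 l, uniq l /\ covers (conv a b n) l & c n = \sum_(i <- l) conv a b n i) ->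
  is_prod a b c.
Proof.
move=> Ha Hb H; apply/is_prodE => n; have [l [ul cl] ->] := H n.
exists (absz ma + absz mb + absz n)%N => M HM; apply: eq_big_covers => //; first exact: window_uniq.
by move=> i /(conv_nz_bounds Ha Hb) Hi; rewrite mem_window; move: Hi HM; lia.
Qed.

Lemma is_prod_deg_le a b c ma mb : deg_le a ma -> deg_le b mb -> is_prod a b c ->
  deg_le c (ma + mb).
Proof.
move=> Ha Hb H n Hn; rewrite (is_prod_sum (l := [::]) Ha Hb H) ?big_nil //.
by move=> i /(conv_nz_bounds Ha Hb) Hi; lia.
Qed.

Lemma is_prod_laurent a b c : is_laurent a -> is_laurent b -> is_prod a b c -> is_laurent c.
Proof. by move=> [ma Ha] [mb Hb] H; exists (ma + mb); apply: is_prod_deg_le Ha Hb H. Qed.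

Lemma is_prod_exists a b : is_laurent a -> is_laurent b -> exists c, is_prod a b c.
Proof.
move=> [ma Ha] [mb Hb]; pose W n := window (absz ma + absz mb + absz n).
exists (fun n => \sum_(i <- W n) conv a b n i).
apply: (is_prod_of_sums Ha Hb) => n; exists (W n) => //; split; first exact: window_uniq.
by move=> i /(conv_nz_bounds Ha Hb) Hi; rewrite mem_window; lia.
Qed.

Lemma is_prodC a b c : is_laurent a -> is_laurent b -> is_prod a b c -> is_prod b a c.
Proof.
move=> [ma Ha] [mb Hb] H; apply: (is_prod_of_sums Hb Ha) => n.
set W := window (absz ma + absz mb + absz n).
exists (map (fun i => n - i) W).
  split; first by rewrite map_inj_uniq ?window_uniq // => x y /= E; lia.
  move=> i /(conv_nz_bounds Hb Ha) Hi; apply/mapP; exists (n - i); last by lia.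
  by rewrite mem_window; lia.
rewrite (is_prod_sum (l := W) Ha Hb H (window_uniq _)); last first.
  by move=> i /(conv_nz_bounds Ha Hb) Hi; rewrite mem_window; lia.
by rewrite [in RHS]big_map; apply: eq_bigr => i _; rewrite /conv mulrC subKr.
Qed.

Definition lead_at (x : laurent) (m : int) := x m != 0 /\ deg_le x m.

Lemma lead_at_uniq x m m' : lead_at x m -> lead_at x m' -> m = m'.
Proof.
move=> [H1 D1] [H2 D2]; apply/eqP; rewrite eq_le.
by rewrite (deg_leP D1 H2) (deg_leP D2 H1).
Qed.

Lemma lead_at_exists x i0 : is_laurent x -> x i0 != 0 -> exists m, lead_at x m.
Proof.
move=> [m Hm] H0.
have ex : exists j : nat, x (i0 + j%:Z) != 0 by exists 0%N; rewrite addr0.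
have ub j : x (i0 + j%:Z) != 0 -> (j <= absz (m - i0))%N.
  by move=> /(deg_leP Hm); lia.
have [j Hj Hmax] := ex_maxnP ex ub.
exists (i0 + j%:Z); split => // i Hi; apply/eqP; apply: contraT => Hx.
have Hle := deg_leP Hm Hx.
have : x (i0 + (absz (i - i0))%:Z) != 0 by have -> : i0 + (absz (i - i0))%:Z = i by lia.
by move/Hmax; lia.
Qed.

Lemma is_prod_lead a b c ma mb : lead_at a ma -> lead_at b mb -> is_prod a b c ->
  lead_at c (ma + mb) /\ c (ma + mb) = a ma * b mb.
Proof.
move=> [Ha0 Ha] [Hb0 Hb] H.
have Ec : c (ma + mb) = a ma * b mb.
  rewrite (is_prod_sum (l := [:: ma]) Ha Hb H) // => [|i /(conv_nz_bounds Ha Hb) Hi].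
    by rewrite big_seq1 /conv addrC addKr.
  by rewrite inE; apply/eqP; lia.
by split => //; split; [rewrite Ec mulf_neq0 | apply: is_prod_deg_le Ha Hb H].
Qed.

Lemma is_prod_nonzerol u v c i : is_prod u v c -> c i != 0 -> exists j, u j != 0.
Proof.
move=> /is_prodE H; have [N HN] := H i; rewrite (HN N) // => Hs.
apply: NNPP => Hu; move: Hs; rewrite big1 ?eqxx // => j _; rewrite /conv.
have -> : u j = 0 by apply/eqP/negPn/negP => Hj; apply: Hu; exists j.
by rewrite mul0r.
Qed.

Lemma is_prod_lead_l u v c mv mc : is_laurent u -> lead_at v mv -> lead_at c mc ->
  is_prod u v c -> lead_at u (mc - mv).
Proof.
move=> Lu Lv Lc H; have [j Hj] := is_prod_nonzerol H Lc.1.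
have [mu Hmu] := lead_at_exists Lu Hj.
by rewrite (lead_at_uniq Lc (is_prod_lead Hmu Lv H).1) addrK.
Qed.

Lemma deg_le_add x y m : deg_le x m -> deg_le y m -> deg_le (addL x y) m.
Proof. by move=> Dx Dy i Hi; rewrite /addL Dx ?Dy ?addr0. Qed.

Lemma lead_at_add x y m : lead_at x m -> lead_at y m -> x m + y m != 0 ->
  lead_at (addL x y) m.
Proof. by move=> [_ Dx] [_ Dy] Hm; split => //; apply: deg_le_add. Qed.

Lemma laurent_add a b : is_laurent a -> is_laurent b -> is_laurent (addL a b).
Proof.
case=> ma Ha [mb Hb]; exists (Num.max ma mb) => i; rewrite gt_max => /andP[h1 h2].
by rewrite /addL Ha ?Hb ?addr0.
Qed.

Lemma laurent_sub a b : is_laurent a -> is_laurent b -> is_laurent (subL a b).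
Proof.
case=> ma Ha [mb Hb]; exists (Num.max ma mb) => i; rewrite gt_max => /andP[h1 h2].
by rewrite /subL Ha ?Hb ?subrr.
Qed.

Lemma laurent_scale k a : is_laurent a -> is_laurent (scaleL k a).
Proof. by case=> ma Ha; exists ma => i Hi; rewrite /scaleL Ha ?mulr0. Qed.

Lemma laurent_shift e a : is_laurent a -> is_laurent (shiftL e a).
Proof. by case=> m H; exists (m - e) => i Hi; rewrite /shiftL H //; lia. Qed.

Lemma polyL_nat p (k : nat) : polyL p k%:Z = p`_k.
Proof. by []. Qed.

Lemma polyL_neg p i : i < 0 -> polyL p i = 0.
Proof. by rewrite /polyL => Hi; case: ifP => //; lia. Qed.

Lemma polyL_deg_le p : deg_le (polyL p) (degp p).
Proof.
move=> [k|k] //; rewrite /degp ltz_nat polyL_nat => Hk.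
by apply: nth_default; move: Hk; case: (size p).
Qed.

Lemma polyL_laurent p : is_laurent (polyL p).
Proof. by exists (degp p); apply: polyL_deg_le. Qed.

Lemma polyL_lead p : p != 0 -> lead_at (polyL p) (degp p).
Proof.
by move=> Hp; split; [rewrite polyL_nat -lead_coefE lead_coef_eq0 | apply: polyL_deg_le].
Qed.

Lemma polyL_nonzero p : p != 0 -> exists i, polyL p i != 0.
Proof. by move=> /polyL_lead[Hp _]; exists (degp p). Qed.

Lemma degp_le p m : p != 0 -> deg_le (polyL p) m -> degp p <= m.
Proof. by move=> /polyL_lead[Hp _] /deg_leP; apply. Qed.

Lemma polyLB p q : polyL (p - q) = subL (polyL p) (polyL q).
Proof.
apply: functional_extensionality => i; rewrite /subL /polyL coefB.
by case: ifP; rewrite ?subr0.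
Qed.

Lemma polyLZ k p : polyL (k *: p) = scaleL k (polyL p).
Proof.
apply: functional_extensionality => i; rewrite /scaleL /polyL coefZ.
by case: ifP; rewrite ?mulr0.
Qed.

Lemma polyLXn (k : nat) i : polyL 'X^k i = if i == k%:Z then 1 else 0.
Proof. by rewrite /polyL coefXn; case: i => [m|m] //=; rewrite eqz_nat; case: (m == k). Qed.

Lemma polyLC c i : polyL c%:P i = if i == 0 then c else 0.
Proof. by rewrite /polyL coefC; case: i => [[|m]|m]. Qed.

Lemma is_prod_polyL p q : is_prod (polyL p) (polyL q) (polyL (p * q)).
Proof.
have nonneg r i : polyL r i != 0 -> 0 <= i.
  by apply: contraR; rewrite -ltNge => /(@polyL_neg r) ->.
apply: (is_prod_of_sums (@polyL_deg_le p) (@polyL_deg_le q)) => n.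
have [Hn|Hn] := ltP n 0.
  exists [::]; last by rewrite big_nil polyL_neg.
  split=> // i; rewrite /conv mulf_eq0 negb_or => /andP[/nonneg h1 /nonneg h2]; lia.
have -> : n = (absz n)%:Z by lia.
move: (absz n) => k {Hn}.
exists (map Posz (iota 0 k.+1)).
  split; first by rewrite map_inj_uniq ?iota_uniq // => x y [].
  move=> i; rewrite /conv mulf_eq0 negb_or => /andP[/nonneg h1 /nonneg h2].
  by apply/mapP; exists (absz i); [rewrite mem_iota; lia | lia].
have -> : iota 0 k.+1 = index_iota 0 k.+1 by rewrite /index_iota subn0.
rewrite polyL_nat coefM big_map big_mkord.
apply: eq_bigr => j _; rewrite /conv polyL_nat.
by have -> : k%:Z - j%:Z = (k - j)%N%:Z by have := ltn_ord j; lia.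
Qed.

Lemma oneLE i : oneL i = if i == 0 then 1 else 0.
Proof. exact: polyLC. Qed.

Lemma is_prod1r a : is_laurent a -> is_prod a oneL a.
Proof.
move=> [ma Ha]; have D1 : deg_le oneL (degp 1) := @polyL_deg_le 1.
apply: (is_prod_of_sums Ha D1) => n.
exists [:: n]; last by rewrite big_seq1 /conv oneLE subrr eqxx mulr1.
split=> // i; rewrite /conv oneLE inE.
by have [E _|_] := eqVneq (n - i) 0; [apply/eqP; lia | rewrite mulr0 eqxx].
Qed.

Section Associativity.
Variables (a b c : laurent) (ma mb mc : nat).
Hypotheses (Da : deg_le a ma%:Z) (Db : deg_le b mb%:Z) (Dc : deg_le c mc%:Z).

Let W n := window (absz n + ma + mb + mc).

Let triple_sum n := \sum_(i <- W n) \sum_(j <- W n) a j * b (i - j) * c (n - i).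

Let is_prod_triple_suml ab abc n : is_prod a b ab -> is_prod ab c abc -> abc n = triple_sum n.
Proof.
move=> Hab Habc; have Dab := is_prod_deg_le Da Db Hab.
rewrite /triple_sum (is_prod_sum (l := W n) Dab Dc Habc (window_uniq _)); last first.
  by move=> i /(conv_nz_bounds Dab Dc) Hi; rewrite mem_window; lia.
apply: eq_big_seq => i; rewrite mem_window => HiW.
have [Hci|/(deg_leP Dc) Hi] := eqVneq (c (n - i)) 0.
  by rewrite /conv Hci mulr0 big1 // => j _; rewrite mulr0.
rewrite /conv (is_prod_sum (l := W n) Da Db Hab (window_uniq _)) ?mulr_suml //.
by move=> j /(conv_nz_bounds Da Db) Hj; rewrite mem_window; lia.
Qed.

Let is_prod_triple_sumr bc abc n : is_prod b c bc -> is_prod a bc abc -> abc n = triple_sum n.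
Proof.
move=> Hbc Habc; have Dbc := is_prod_deg_le Db Dc Hbc.
rewrite /triple_sum exchange_big (is_prod_sum (l := W n) Da Dbc Habc (window_uniq _)); last first.
  by move=> j /(conv_nz_bounds Da Dbc) Hj; rewrite mem_window; lia.
apply: eq_big_seq => j; rewrite mem_window => HjW.
have [Haj|/(deg_leP Da) Hj] := eqVneq (a j) 0.
  by rewrite /conv Haj mul0r big1 // => i _; rewrite !mul0r.
rewrite /conv (is_prod_sum (l := [seq i - j | i <- W n]) Db Dc Hbc).
- rewrite big_map mulr_sumr; apply: eq_bigr => i _; rewrite mulrA; do 2 f_equal; lia.
- by rewrite map_inj_uniq ?window_uniq // => x y /= E; lia.
move=> i /(conv_nz_bounds Db Dc) Hi; apply/mapP; exists (i + j); last by lia.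
by rewrite mem_window; lia.
Qed.

Lemma is_prodA_deg ab bc abc :
  is_prod a b ab -> is_prod b c bc -> is_prod ab c abc -> is_prod a bc abc.
Proof.
move=> Hab Hbc Habc.
have [abc' Habc'] := is_prod_exists (ex_intro _ _ Da) (ex_intro _ _ (is_prod_deg_le Db Dc Hbc)).
suff -> : abc = abc' by [].
apply: functional_extensionality => n.
by rewrite (is_prod_triple_suml n Hab Habc) (is_prod_triple_sumr n Hbc Habc').
Qed.

End Associativity.

Lemma is_prodA a b c ab bc abc : is_laurent a -> is_laurent b -> is_laurent c ->
  is_prod a b ab -> is_prod b c bc -> is_prod ab c abc -> is_prod a bc abc.
Proof.
move=> /laurent_deg_le_nat[ma Da] /laurent_deg_le_nat[mb Db] /laurent_deg_le_nat[mc Dc].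
by move=> Hab Hbc Habc; apply: (is_prodA_deg Da Db Dc Hab Hbc Habc).
Qed.

(** * Cancellation and inverses *)

Lemma is_prod_cancel u v w c : is_laurent u -> is_laurent v -> is_laurent w ->
  (exists i, u i != 0) -> is_prod u v c -> is_prod u w c -> v = w.
Proof.
move=> Lu Lv Lw [i0 Hi0] Hv Hw; apply: functional_extensionality => i.
apply/eqP; rewrite -subr_eq0; apply: contraT => Hne.
have [mu Hmu] := lead_at_exists Lu Hi0.
have [mz Hmz] := lead_at_exists (laurent_sub Lv Lw) Hne.
have [[Hnz _] _] := is_prod_lead Hmu Hmz (is_prodBr Hv Hw).
by rewrite /subL subrr eqxx in Hnz.
Qed.

Lemma shiftLK e x : shiftL e (shiftL (- e) x) = x.
Proof. by apply: functional_extensionality => i; rewrite /shiftL addrK. Qed.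

Lemma shiftLNK e x : shiftL (- e) (shiftL e x) = x.
Proof. by apply: functional_extensionality => i; rewrite /shiftL addrNK. Qed.

Lemma is_prod_shiftl e a b c : is_laurent a -> is_laurent b -> is_prod a b c ->
  is_prod (shiftL e a) b (shiftL e c).
Proof.
move=> La Lb H; apply: (is_prodC Lb (laurent_shift e La)).
exact: is_prod_shiftr (is_prodC La Lb H).
Qed.

Lemma is_prod_shift_move e u v c : is_laurent u -> is_laurent v ->
  is_prod (shiftL e u) v c -> is_prod u (shiftL e v) c.
Proof.
move=> Lu Lv /(is_prod_shiftl (- e) (laurent_shift e Lu) Lv).
by rewrite shiftLNK => /(is_prod_shiftr e); rewrite shiftLK.
Qed.

(* When deg u = 0, [inv_coef u k] is the coefficient of T^-k in 1/u, computed by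
   the usual recursion for inverting a power series in T^-1. *)
Fixpoint inv_coefs (u : laurent) (k : nat) : seq rat :=
  if k is k'.+1 then
    rcons (inv_coefs u k')
      (- (u 0)^-1 * \sum_(j < k'.+1) u (- j.+1%:Z) * nth 0 (inv_coefs u k') (k' - j))
  else [:: (u 0)^-1].

Definition inv_coef u k := nth 0 (inv_coefs u k) k.

Lemma size_inv_coefs u k : size (inv_coefs u k) = k.+1.
Proof. by elim: k => //= k IH; rewrite size_rcons IH. Qed.

Lemma nth_inv_coefs u k j : (j <= k)%N -> nth 0 (inv_coefs u k) j = inv_coef u j.
Proof.
elim: k => [|k IH]; first by rewrite leqn0 => /eqP ->.
rewrite leq_eqVlt => /orP[/eqP -> //|Hj].
by rewrite /= nth_rcons size_inv_coefs Hj IH.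
Qed.

Lemma inv_coefS u k :
  inv_coef u k.+1 = - (u 0)^-1 * \sum_(j < k.+1) u (- j.+1%:Z) * inv_coef u (k - j).
Proof.
rewrite {1}/inv_coef /= nth_rcons size_inv_coefs ltnn eqxx; congr (_ * _).
by apply: eq_bigr => j _; rewrite nth_inv_coefs // leq_subr.
Qed.

Lemma inv_coef_conv u k : u 0 != 0 ->
  \sum_(j < k.+1) u (- j%:Z) * inv_coef u (k - j) = if k == 0%N then 1 else 0.
Proof.
move=> Hu0; case: k => [|k]; first by rewrite big_ord1 /inv_coef /= mulfV.
by rewrite big_ord_recl /= subn0 inv_coefS mulrA mulrN mulfV // mulN1r addNr.
Qed.

Lemma is_prod_inv_deg0 u : deg_le u 0 -> u 0 != 0 ->
  exists v, deg_le v 0 /\ is_prod u v oneL.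
Proof.
move=> Du Hu0; pose v : laurent := fun n => if n <= 0 then inv_coef u (absz n) else 0.
have Dv : deg_le v 0 by move=> i Hi; rewrite /v; case: ifP => //; lia.
exists v; split => //; apply: (is_prod_of_sums Du Dv) => n.
have [Hn|Hn] := ltP 0 n.
  exists [::]; last by rewrite big_nil oneLE; case: eqP => //; lia.
  by split=> // i /(conv_nz_bounds Du Dv) Hi; lia.
have -> : n = - (absz n)%:Z by lia.
move: (absz n) => k {Hn}.
exists [seq - j%:Z | j <- iota 0 k.+1].
  split; first by rewrite map_inj_uniq ?iota_uniq // => x y /= E; lia.
  move=> i /(conv_nz_bounds Du Dv) Hi; apply/mapP; exists (absz i); last by lia.
  by rewrite mem_iota; lia.
rewrite oneLE; have -> : (- k%:Z == 0) = (k == 0%N) by apply/eqP/eqP; lia.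
rewrite -(inv_coef_conv k Hu0).
have -> : iota 0 k.+1 = index_iota 0 k.+1 by rewrite /index_iota subn0.
rewrite big_map big_mkord; apply: eq_bigr => j _; rewrite /conv /v.
have := ltn_ord j; case: ifP => [_ Hj|]; last by lia.
by congr (_ * inv_coef u _); lia.
Qed.

Lemma laurent_inv u : is_laurent u -> (exists i, u i != 0) ->
  exists v, is_laurent v /\ is_prod u v oneL.
Proof.
move=> Lu [i0 Hi0]; have [m [Hm Dm]] := lead_at_exists Lu Hi0.
have Du' : deg_le (shiftL m u) 0 by move=> i Hi; rewrite /shiftL Dm //; lia.
have Hu0 : shiftL m u 0 != 0 by rewrite /shiftL add0r.
have [v [Dv Hv]] := is_prod_inv_deg0 Du' Hu0.
have Lv : is_laurent v by exists 0.
by exists (shiftL m v); split; [apply: laurent_shift | apply: is_prod_shift_move].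
Qed.

Lemma laurent_div u b : is_laurent u -> is_laurent b -> (exists i, u i != 0) ->
  exists x, is_laurent x /\ is_prod u x b.
Proof.
move=> Lu Lb Hnz; have [v [Lv Hv]] := laurent_inv Lu Hnz.
have [x Hx] := is_prod_exists Lb Lv; exists x; split; first exact: is_prod_laurent Hx.
have [ub Hub] := is_prod_exists Lu Lb.
have [y Hy] := is_prod_exists (is_prod_laurent Lu Lb Hub) Lv.
have Hby := is_prodA Lb Lu Lv (is_prodC Lu Lb Hub) Hv Hy.
by rewrite -(is_prod_uniq Hby (is_prod1r Lb)); apply: is_prodA Lu Lb Lv Hub Hx Hy.
Qed.

Lemma floor_uniq x p q : is_floor x p -> is_floor x q -> p = q.
Proof. by move=> Hp Hq; apply/polyP => i; rewrite -[p`_i](Hp i%:Z) // Hq. Qed.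

(** * Continued fractions and irrationality *)

Lemma floor_frac_deg_lt0 x b : is_floor x b -> deg_le (subL x (polyL b)) (-1).
Proof. by move=> Fx i Hi; rewrite /subL Fx /polyL ?ifT ?subrr //; lia. Qed.

Lemma cf_denominator_step x y b p q : is_laurent x -> is_laurent y -> is_floor x b ->
  is_prod (subL x (polyL b)) y oneL -> q != 0 -> is_prod (polyL q) x (polyL p) ->
  exists2 q' : {poly rat}, (q' != 0) && (size q' < size q)%N & is_prod (polyL q') y (polyL q).
Proof.
move=> Lx Ly Fx Hy Hq Hx; set u := subL x (polyL b).
have Lu : is_laurent u := laurent_sub Lx (polyL_laurent b).
have Hu : is_prod (polyL q) u (polyL (p - q * b)).
  by rewrite polyLB; apply: is_prodBr Hx (is_prod_polyL q b).
have [Y HY] := is_prod_exists (polyL_laurent (p - q * b)) Ly.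
have := is_prodA (polyL_laurent q) Lu Ly Hu Hy HY.
move=> /is_prod_uniq/(_ (is_prod1r (polyL_laurent q))) EY; rewrite EY in HY.
exists (p - q * b) => //; apply/andP; split.
  apply: contraNneq Hq => E; apply/eqP/polyP => i; rewrite coef0.
  apply/eqP/negPn/negP => Hqi; have [j] := is_prod_nonzerol HY (Hqi : polyL q i%:Z != 0).
  by rewrite E /polyL coef0 if_same eqxx.
have Dq' := is_prod_deg_le (@polyL_deg_le q) (floor_frac_deg_lt0 Fx) Hu.
have [->|Hq'] := eqVneq (p - q * b) 0; first by rewrite size_poly0 lt0n size_poly_eq0.
by have := degp_le Hq' Dq'; rewrite /degp; have := size_poly_gt0 q; rewrite Hq; lia.
Qed.

Lemma cf_expansion_irrational x alpha a p q : cf_expansion x alpha a -> q != 0 ->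
  ~ is_prod (polyL q) x (polyL p).
Proof.
move=> [H0 Hcf] Hq Hx.
suff K h : exists p' q' : {poly rat}, [/\ q' != 0, (size q' + h <= size q)%N &
    is_prod (polyL q') (alpha h) (polyL p')].
  have [p' [q' [Hq' Hs _]]] := K (size q).
  by move: Hq'; rewrite -size_poly_eq0; lia.
elim: h => [|h [p' [q' [Hq' Hs Hh]]]]; first by exists p, q; rewrite H0 addn0.
have [Lh [Fh Ph]] := Hcf h; have [Lh1 _] := Hcf h.+1.
have [q'' /andP[Hq'' Hs'] H'] := cf_denominator_step Lh Lh1 Fh Ph Hq' Hh.
by exists q', q''; split => //; lia.
Qed.

(** * Square roots and their rational approximations *)

Lemma is_prod_diff_sq X Z p : is_laurent X -> is_prod X X (polyL Z) ->
  is_prod (subL X (polyL p)) (addL X (polyL p)) (polyL (Z - p * p)).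
Proof.
move=> LX H; have [Xp HXp] := is_prod_exists LX (polyL_laurent p).
have H1 := is_prodDr H HXp.
have H2 := is_prodDr (is_prodC LX (polyL_laurent p) HXp) (is_prod_polyL p p).
have -> : polyL (Z - p * p) = subL (addL (polyL Z) Xp) (addL Xp (polyL (p * p))).
  by apply: functional_extensionality => i; rewrite polyLB /subL /addL; ring.
exact: is_prodBl H1 H2.
Qed.

Lemma is_prod_sq_mul s D q X : is_laurent s -> is_prod s s (polyL D) ->
  is_prod (polyL q) s X -> is_prod X X (polyL (q * (q * D))).
Proof.
move=> Ls HD HX; have Lq := polyL_laurent q; have LX := is_prod_laurent Lq Ls HX.
have [Y HY] := is_prod_exists LX Ls.
have := is_prodA Lq Ls Ls HX HD HY; move/is_prod_uniq/(_ (is_prod_polyL q D)) => EY.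
rewrite EY in HY; have [Z HZ] := is_prod_exists LX LX.
have := is_prodA Lq Ls LX HX (is_prodC LX Ls HY) HZ.
by move/is_prod_uniq/(_ (is_prod_polyL q (q * D))) => EZ; rewrite EZ in HZ.
Qed.

Lemma sq_eq_polyL X p : is_laurent X -> is_prod X X (polyL (p * p)) ->
  X = polyL p \/ X = polyL (- p).
Proof.
move=> LX HX; have := is_prod_diff_sq p LX HX; rewrite subrr.
have [[i Hi]|Hm] := classic (exists i, subL X (polyL p) i != 0); last first.
  move=> _; left; apply: functional_extensionality => i; apply/eqP; rewrite -subr_eq0.
  by apply/negPn/negP => Hi; apply: Hm; exists i.
have [[j Hj] H|Hp _] := classic (exists j, addL X (polyL p) j != 0); last first.
  right; apply: functional_extensionality => j; rewrite -scaleN1r polyLZ /scaleL.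
  apply/eqP; rewrite mulN1r -subr_eq0 opprK.
  by apply/negPn/negP => Hj; apply: Hp; exists j.
have [mi Hmi] := lead_at_exists (laurent_sub LX (polyL_laurent p)) Hi.
have [mj Hmj] := lead_at_exists (laurent_add LX (polyL_laurent p)) Hj.
have [[Hnz _] _] := is_prod_lead Hmi Hmj H.
by rewrite /polyL coef0 if_same eqxx in Hnz.
Qed.

Definition pell_solution (D : {poly rat}) (d : nat) (P Q : {poly rat}) :=
  [/\ P * P - D * (Q * Q) = 1, 0 < lead_coef P, 0 < lead_coef Q & size P = (size Q + d)%N].

Section SqrtApproximation.
Variables (D : {poly rat}) (d : nat) (s : laurent).
Hypothesis Hs : is_sqrt D d s.

Let Ls : is_laurent s. Proof. by case: Hs. Qed.
Let HD : is_prod s s (polyL D). Proof. by case: Hs => _ []. Qed.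
Let Sd : s d%:Z = 1. Proof. by case: Hs => _ [_ []]. Qed.
Let Ds : deg_le s d%:Z. Proof. by case: Hs => _ [_ []]. Qed.

Lemma sqrt_coef i : i < d%:Z -> (forall j, i < j -> j < d%:Z -> s j = 0) ->
  polyL D (d%:Z + i) = s i + s i.
Proof.
move=> Hi Hz; rewrite (is_prod_sum (l := [:: i; d%:Z]) Ds Ds HD); first last.
- move=> j Hj; have /andP[hj1 hj2] := conv_nz_bounds Ds Ds Hj.
  rewrite !inE; have [//|Eji] := eqVneq j i; have [//|Ejd] := eqVneq j d%:Z.
  by move: Hj; rewrite /conv Hz ?mul0r ?eqxx //; lia.
- by rewrite /= inE andbT; apply/eqP; lia.
by rewrite big_cons big_seq1 /conv addrK [d%:Z + i]addrC addrK Sd mulr1 mul1r.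
Qed.

Lemma sqrt_coef_gap lo : (forall i, lo < i -> i < d%:Z -> polyL D (d%:Z + i) = 0) ->
  forall i, lo < i -> i < d%:Z -> s i = 0.
Proof.
move=> HD0; suff K k : forall i, d%:Z - k%:Z <= i -> lo < i -> i < d%:Z -> s i = 0.
  by move=> i h1 h2; apply: (K (absz (d%:Z - i))) => //; lia.
elim: k => [|k IH] i h0 h1 h2; first by lia.
have [h3|h3] := ltP (d%:Z - k%:Z - 1) i; first by apply: IH => //; lia.
have := sqrt_coef h2 (fun j j1 j2 => IH j ltac:(lia) ltac:(lia) j2).
by rewrite HD0 //; lra.
Qed.

Lemma good_approx_norm k r p q : d%:Z < k -> is_prod (polyL q) r (polyL p) ->
  deg_le (subL s r) (- (2 * degp q) - k) -> q * (q * D) = p * p.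
Proof.
move=> Hk Hr Hd; have Lq := polyL_laurent q; have Dq := @polyL_deg_le q.
have [X HX] := is_prod_exists Lq Ls; have LX := is_prod_laurent Lq Ls HX.
have DE := is_prod_deg_le Dq Hd (is_prodBr HX Hr).
have Dr : deg_le r d%:Z.
  move=> i Hi; have := Hd i; rewrite /subL Ds // sub0r => H.
  by apply/eqP; rewrite -oppr_eq0 H //; rewrite /degp; lia.
have DF : deg_le (addL X (polyL p)) (degp q + d%:Z).
  by apply: deg_le_add; [apply: is_prod_deg_le Dq Ds HX | apply: is_prod_deg_le Dq Dr Hr].
have DG := is_prod_deg_le DE DF (is_prod_diff_sq p LX (is_prod_sq_mul Ls HD HX)).
apply/eqP; rewrite -subr_eq0; apply/eqP/polyP => i; rewrite coef0 -polyL_nat DG //.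
by rewrite /degp; lia.
Qed.

Lemma no_good_approx_gt alpha a k r : cf_expansion s alpha a -> d%:Z < k ->
  ~ good_approx s k r.
Proof.
move=> Hcf Hk [Lr [p [q [Hq [Hr Hd]]]]].
have [X HX] := is_prod_exists (polyL_laurent q) Ls.
have := is_prod_sq_mul Ls HD HX; rewrite (good_approx_norm Hk Hr Hd).
case/(sq_eq_polyL (is_prod_laurent (polyL_laurent q) Ls HX)) => EX; rewrite EX in HX.
  exact: cf_expansion_irrational Hcf Hq HX.
exact: cf_expansion_irrational Hcf Hq HX.
Qed.

Lemma pell_good_approx P Q : pell_solution D d P Q ->
  exists r, good_approx s d%:Z r /\ lead_at (subL s r) (- d%:Z - 2 * degp Q).
Proof.
move=> [HP lP lQ sP]; have HQ : Q != 0 by rewrite -lead_coef_eq0 lt0r_neq0.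
have Lq := polyL_laurent Q; have LQ := polyL_lead HQ.
have [r [Lr Hr]] := laurent_div Lq (polyL_laurent P) (polyL_nonzero HQ).
have [X HX] := is_prod_exists Lq Ls; have LX := is_prod_laurent Lq Ls HX.
have Hconj : is_prod (subL X (polyL P)) (addL X (polyL P)) (polyL (-1)).
  have -> : -1 = Q * (Q * D) - P * P by rewrite -HP; ring.
  exact: is_prod_diff_sq P LX (is_prod_sq_mul Ls HD HX).
have Ls_lead : lead_at s d%:Z by split; rewrite ?Sd ?oner_neq0.
have [LX' EX] := is_prod_lead LQ Ls_lead HX.
have degP : degp P = degp Q + d%:Z by rewrite /degp sP; have := size_poly_gt0 Q; rewrite HQ; lia.
have LXP : lead_at (addL X (polyL P)) (degp Q + d%:Z).
  apply: lead_at_add LX' _ _.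
    by rewrite -degP; apply: polyL_lead; rewrite -lead_coef_eq0 lt0r_neq0.
  rewrite EX Sd mulr1 -degP /degp !polyL_nat -!lead_coefE.
  by rewrite lt0r_neq0 // addr_gt0.
have L1 : lead_at (polyL (-1)) 0.
  have N1 : (-1 : {poly rat}) != 0 by rewrite oppr_eq0 oner_neq0.
  by have := polyL_lead N1; rewrite /degp size_opp size_poly1.
have LXm := is_prod_lead_l (laurent_sub LX (polyL_laurent P)) LXP L1 Hconj.
have Lsr := is_prod_lead_l (laurent_sub Ls Lr) LQ LXm
  (is_prodC Lq (laurent_sub Ls Lr) (is_prodBr HX Hr)).
have Em : 0 - (degp Q + d%:Z) - degp Q = - d%:Z - 2 * degp Q by lia.
rewrite Em in Lsr; exists r; split => //; split => //; exists P, Q; do !split => //.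
by apply: (deg_le_trans Lsr.2); lia.
Qed.

End SqrtApproximation.

(** * Periodic expansions *)

Section PeriodicExpansion.
Variables (s : laurent) (A a1 : {poly rat}) (c : rat) (e : nat).
Variables (alpha : nat -> laurent) (a : nat -> {poly rat}).
Hypotheses (Ls : is_laurent s) (Fs : is_floor s A) (c0 : c != 0).
Hypothesis Hnorm : is_prod (subL s (polyL A)) (addL s (polyL A)) (polyL (c *: 'X^e)).
(* a1 = 2A/(c T^e), the division being exact. *)
Hypothesis Ha1 : forall n, polyL a1 n = c^-1 * (2 * polyL A (n + e%:Z)).
Hypothesis Hcf : cf_expansion s alpha a.

Let conj_s := addL s (polyL A).
Let alpha1 := shiftL e%:Z (scaleL c^-1 conj_s).

Let Lconj : is_laurent conj_s. Proof. exact: laurent_add Ls (polyL_laurent A). Qed.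
Let Lalpha1 : is_laurent alpha1. Proof. exact: laurent_shift (laurent_scale _ Lconj). Qed.
Let Lfrac : is_laurent (subL s (polyL A)). Proof. exact: laurent_sub Ls (polyL_laurent A). Qed.

Let Fs_nonneg i : 0 <= i -> s i = polyL A i.
Proof. by move=> Hi; rewrite Fs // /polyL Hi. Qed.

Let Fconj : is_floor conj_s (2%:R *: A).
Proof. by move=> i Hi; rewrite /conj_s /addL Fs_nonneg // coefZ /polyL Hi; ring. Qed.

Let Falpha1 : is_floor alpha1 a1.
Proof.
move=> i Hi; rewrite /alpha1 /scaleL /shiftL /conj_s /addL Fs_nonneg; last by lia.
by have := Ha1 i; rewrite /polyL Hi => ->; congr (_ * _); ring.
Qed.

Let scaled_norm : shiftL e%:Z (scaleL c^-1 (polyL (c *: 'X^e))) = oneL.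
Proof.
apply: functional_extensionality => i.
rewrite /shiftL /scaleL polyLZ /scaleL polyLXn oneLE.
by case: eqP => E; case: eqP => E'; rewrite ?mulr1 ?mulVf ?mulr0 //; lia.
Qed.

Let alpha1_inv : is_prod (subL s (polyL A)) alpha1 oneL.
Proof. by rewrite -scaled_norm; apply/is_prod_shiftr/is_prodZr. Qed.

Let conj_inv : is_prod (subL alpha1 (polyL a1)) conj_s oneL.
Proof.
have := is_prod_shiftl e%:Z (laurent_scale c^-1 Lfrac) Lconj (is_prodZl c^-1 Hnorm).
rewrite scaled_norm; congr is_prod; apply: functional_extensionality => i.
by rewrite /subL /alpha1 /shiftL /scaleL /conj_s /addL Ha1; ring.
Qed.

Let conj_frac : subL conj_s (polyL (2%:R *: A)) = subL s (polyL A).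
Proof.
by apply: functional_extensionality => i; rewrite polyLZ /subL /conj_s /addL /scaleL; ring.
Qed.

Definition period_alpha h := if h == 0%N then s else if odd h then alpha1 else conj_s.
Definition period_quot h := if h == 0%N then A else if odd h then a1 else 2%:R *: A.

Lemma period_laurent h : is_laurent (period_alpha h).
Proof. by rewrite /period_alpha; case: eqP => // _; case: ifP. Qed.

Lemma period_floor h : is_floor (period_alpha h) (period_quot h).
Proof. by rewrite /period_alpha /period_quot; case: eqP => // _; case: ifP. Qed.

Lemma period_step h :
  is_prod (subL (period_alpha h) (polyL (period_quot h))) (period_alpha h.+1) oneL.
Proof.
rewrite /period_alpha /period_quot /=; case: eqP => [->|_] //=.
by case: ifP => _ //=; rewrite conj_frac.
Qed.

Lemma cf_expansion_periodic h : alpha h = period_alpha h /\ a h = period_quot h.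
Proof.
have quot k : alpha k = period_alpha k -> a k = period_quot k.
  by move=> Ek; have [_ [Fk _]] := Hcf.2 k; rewrite Ek in Fk; apply: floor_uniq Fk (period_floor k).
suff Ealpha : alpha h = period_alpha h by split=> //; apply: quot.
elim: h => [|h IH]; first by case: Hcf.
have [_ [_ Ph]] := Hcf.2 h; have [Lh1 _] := Hcf.2 h.+1.
rewrite IH (quot h IH) in Ph.
have Lfrac_h := laurent_sub (period_laurent h) (polyL_laurent (period_quot h)).
have nz : exists j, subL (period_alpha h) (polyL (period_quot h)) j != 0.
  by apply: (is_prod_nonzerol (i := 0) Ph); rewrite oneLE eqxx oner_neq0.
exact: is_prod_cancel Lfrac_h Lh1 (period_laurent h.+1) nz Ph (period_step h).
Qed.

End PeriodicExpansion.

(** * Pell equations and the Lagrange constant *)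

Lemma size_lead_gt0M (p q : {poly rat}) : 0 < lead_coef p -> 0 < lead_coef q ->
  size (p * q) = (size p + size q).-1 /\ 0 < lead_coef (p * q).
Proof.
move=> hp hq; have nz r : 0 < lead_coef r -> r != 0 by rewrite -lead_coef_eq0; apply: lt0r_neq0.
by rewrite size_mul ?lead_coefM ?mulr_gt0 //; apply: nz.
Qed.

Lemma size_lead_gt0D (p q : {poly rat}) : size p = size q ->
  0 < lead_coef p -> 0 < lead_coef q ->
  size (p + q) = size p /\ 0 < lead_coef (p + q).
Proof.
move=> E hp hq; have sp : (0 < size p)%N by rewrite size_poly_gt0 -lead_coef_eq0 lt0r_neq0.
have C : (p + q)`_(size p).-1 = lead_coef p + lead_coef q by rewrite coefD /lead_coef E.
have Hs : size (p + q) = size p.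
  apply/eqP; rewrite eqn_leq; apply/andP; split; first by rewrite -[size p]maxnn {2}E size_polyD.
  have C0 : (p + q)`_(size p).-1 != 0 by rewrite C lt0r_neq0 // addr_gt0.
  by rewrite leqNgt; apply: contra C0 => Hlt; apply/eqP/nth_default; rewrite -ltnS prednK.
by rewrite /lead_coef Hs C addr_gt0.
Qed.

Section PellPowers.
Variables (D P Q : {poly rat}) (d : nat).
Hypotheses (hd : (0 < d)%N) (sD : size D = (2 * d).+1) (lD : 0 < lead_coef D).
Hypothesis HPQ : pell_solution D d P Q.

(* (pell_pow n).1 + (pell_pow n).2 sqrt D = (P + Q sqrt D)^(n+1). *)
Fixpoint pell_pow n : {poly rat} * {poly rat} :=
  if n is n'.+1 then
    let: (Pn, Qn) := pell_pow n' in (P * Pn + D * Q * Qn, P * Qn + Q * Pn)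
  else (P, Q).

Lemma pell_pow_spec n :
  pell_solution D d (pell_pow n).1 (pell_pow n).2 /\ (n < size (pell_pow n).2)%N.
Proof.
have [HP lP lQ sP] := HPQ.
have sQ : (0 < size Q)%N by rewrite size_poly_gt0 -lead_coef_eq0 lt0r_neq0.
have sizes x y : (0 < x)%N -> (0 < y)%N ->
  [/\ (x + d + (y + d)).-1 = (((2 * d).+1 + x).-1 + y).-1,
      (x + d + y).-1 = (x + (y + d)).-1,
      (y < (x + d + y).-1)%N & (x + d + (y + d)).-1 = ((x + d + y).-1 + d)%N].
  by move=> x0 y0; split; lia.
elim: n => [|n]; first by rewrite /= size_poly_gt0 -lead_coef_eq0 lt0r_neq0.
rewrite /=; case: (pell_pow n) => Pn Qn /= [[Hn lPn lQn sPn] sQn].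
have [E5 E6 Egrow Ed] := sizes _ _ sQ (leq_ltn_trans (leq0n n) sQn).
have [s1 l1] := size_lead_gt0M lP lPn.
have [sDQ lDQ] := size_lead_gt0M lD lQ.
have [s2 l2] := size_lead_gt0M lDQ lQn; rewrite sDQ in s2.
have [s3 l3] := size_lead_gt0M lP lQn.
have [s4 l4] := size_lead_gt0M lQ lPn.
have e5 : size (P * Pn) = size (D * Q * Qn) by rewrite s1 s2 sP sPn sD E5.
have e6 : size (P * Qn) = size (Q * Pn) by rewrite s3 s4 sP sPn E6.
have [s5 l5] := size_lead_gt0D e5 l1 l2.
have [s6 l6] := size_lead_gt0D e6 l3 l4.
split; last by rewrite s6 s3 sP (leq_ltn_trans sQn Egrow).
split=> [|//|//|]; last by rewrite s5 s6 s1 s3 sP sPn Ed.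
by rewrite -[1]mulr1 -{1}HP -Hn; ring.
Qed.

End PellPowers.

Lemma lead_at_lower_bound x (l : list laurent) :
  exists M : int, forall r, List.In r l -> forall m, lead_at (subL x r) m -> M <= m.
Proof.
elim: l => [|r0 l [M HM]]; first by exists 0.
have [[m0 Hm0]|Hn] := classic (exists m, lead_at (subL x r0) m).
  exists (Num.min M m0) => r [<-|Hr] m Hm.
    by rewrite (lead_at_uniq Hm0 Hm) ge_min lexx orbT.
  by rewrite ge_min (HM r Hr m Hm).
exists M => r [<-|Hr] m Hm; last exact: HM r Hr m Hm.
by case: Hn; exists m.
Qed.

Lemma lagrange_eq_of_pell D d s alpha a P Q : (0 < d)%N -> is_sqrt D d s ->
  cf_expansion s alpha a -> size D = (2 * d).+1 -> 0 < lead_coef D ->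
  pell_solution D d P Q -> lagrange_eq s d%:Z.
Proof.
move=> hd Hs Hcf sD lD HPQ; split=> [[l Hl]|k Hk]; last first.
  rewrite leNgt; apply/negP => Hlt; apply: Hk.
  by exists nil => r /(no_good_approx_gt Hs Hcf Hlt).
have [M HM] := lead_at_lower_bound s l.
have [HPQn sQn] := pell_pow_spec hd sD lD HPQ (absz M).
have [r [Hr Lr]] := pell_good_approx Hs HPQn.
by have := HM r (Hl r Hr) _ Lr; rewrite /degp; move: sQn; move: (size _) => y; lia.
Qed.

(** * The square roots of T^(2d) + T^e *)

Lemma size_lead_X2d_Xe (d e : nat) : (e < 2 * d)%N ->
  size ('X^(2 * d) + 'X^e : {poly rat}) = (2 * d).+1 /\
  lead_coef ('X^(2 * d) + 'X^e : {poly rat}) = 1.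
Proof.
move=> he; have H : (size ('X^e : {poly rat}) < size ('X^(2 * d) : {poly rat}))%N.
  by rewrite !size_polyXn.
by rewrite size_polyDl // lead_coefDl // lead_coefXn size_polyXn.
Qed.

Lemma size_lead_2Xn1 (k : nat) : (0 < k)%N ->
  size (2%:R *: 'X^k + 1 : {poly rat}) = k.+1 /\ lead_coef (2%:R *: 'X^k + 1 : {poly rat}) = 2%:R.
Proof.
move=> hk; have s2 : size (2%:R *: 'X^k : {poly rat}) = k.+1 by rewrite size_scale ?size_polyXn.
have H : (size (1%R : {poly rat}) < size (2%:R *: 'X^k : {poly rat}))%N.
  by rewrite s2 size_poly1.
by rewrite size_polyDl // lead_coefDl // lead_coefZ lead_coefXn mulr1 s2.
Qed.

Lemma pell_solution_X2d_Xe (d e : nat) : (0 < d)%N -> (e <= d)%N ->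
  pell_solution ('X^(2 * d) + 'X^e) d (2%:R *: 'X^(2 * d - e) + 1) (2%:R *: 'X^(d - e)).
Proof.
move=> hd he; have [sP lP] := size_lead_2Xn1 (k := (2 * d - e)%N) ltac:(lia).
split; rewrite ?sP ?lP ?lead_coefZ ?lead_coefXn ?mulr1 ?size_scale ?size_polyXn //; last by lia.
have E1 : 'X^(2 * d - e) = 'X^e * 'X^(d - e) * 'X^(d - e) :> {poly rat}.
  by rewrite -!exprD; congr ('X^_); lia.
have E2 : 'X^(2 * d) = 'X^e * 'X^e * 'X^(d - e) * 'X^(d - e) :> {poly rat}.
  by rewrite -!exprD; congr ('X^_); lia.
by rewrite E1 E2 -!mul_polyC !polyC_natr; ring.
Qed.

Section SqrtX2dXe.
Variables (d e : nat) (s : laurent).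
Hypothesis Hs : is_sqrt ('X^(2 * d) + 'X^e) d s.

Lemma sqrt_X2d_Xe_gap i : (e <= d)%N -> e%:Z - d%:Z < i -> i < d%:Z -> s i = 0.
Proof.
move=> he; apply: (sqrt_coef_gap Hs) => j h1 h2; rewrite /polyL coefD !coefXn ifT; last by lia.
have -> : (absz (d%:Z + j)%R == 2 * d)%N = false by apply/eqP; lia.
by have -> : (absz (d%:Z + j)%R == e)%N = false by apply/eqP; lia.
Qed.

Lemma sqrt_X2d_Xe_floor : (e < d)%N -> is_floor s 'X^d.
Proof.
move=> he i Hi; have [_ [_ [Sd Ds]]] := Hs; rewrite coefXn.
have [Hlt|Hgt|->] := ltgtP i d%:Z; last by rewrite Sd eqxx.
- by rewrite (_ : _ == d = false); [apply: sqrt_X2d_Xe_gap; lia | apply/eqP; lia].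
- by rewrite (_ : _ == d = false) ?Ds //; apply/eqP; lia.
Qed.

Lemma lagrange_sqrt_X2d_Xe alpha a : (0 < d)%N -> (e <= d)%N -> cf_expansion s alpha a ->
  lagrange_eq s d%:Z.
Proof.
move=> hd he Hcf; have [sD lD] := size_lead_X2d_Xe (d := d) (e := e) ltac:(lia).
apply: lagrange_eq_of_pell hd Hs Hcf sD _ (pell_solution_X2d_Xe hd he).
by rewrite lD ltr01.
Qed.

Lemma cf_sqrt_X2d_Xe alpha a h : (e < d)%N -> cf_expansion s alpha a ->
  (size (a h)).-1 = (if ~~ odd h then d else (d - e)%N).
Proof.
move=> he Hcf; have [Ls [HD _]] := Hs.
have Hnorm : is_prod (subL s (polyL 'X^d)) (addL s (polyL 'X^d)) (polyL (1 *: 'X^e)).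
  have -> : 1 *: 'X^e = 'X^(2 * d) + 'X^e - 'X^d * 'X^d :> {poly rat}.
    by rewrite -exprD addnn -mul2n scale1r; ring.
  exact: is_prod_diff_sq Ls HD.
have Ha1 n : polyL (2%:R *: 'X^(d - e)) n = 1^-1 * (2 * polyL 'X^d (n + e%:Z)).
  rewrite polyLZ /scaleL !polyLXn invr1 mul1r.
  by have -> : (n + e%:Z == d%:Z) = (n == (d - e)%N%:Z) by apply/eqP/eqP; lia.
have [_ ->] := cf_expansion_periodic Ls (sqrt_X2d_Xe_floor he) (oner_neq0 _) Hnorm Ha1 Hcf h.
rewrite /period_quot; case: eqP => [->|_]; first by rewrite size_polyXn.
by case: ifP => _; rewrite size_scale ?size_polyXn.
Qed.

End SqrtX2dXe.

Lemma sqrt_X2d_Xd_floor d s : (0 < d)%N -> is_sqrt ('X^(2 * d) + 'X^d) d s ->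
  is_floor s ('X^d + (2^-1)%:P).
Proof.
move=> hd Hs; have [_ [_ [Sd Ds]]] := Hs.
have gap i : 0 < i -> i < d%:Z -> s i = 0.
  by move=> h1 h2; apply: (sqrt_X2d_Xe_gap Hs (leqnn d)) => //; lia.
have S0 : s 0 = 2^-1.
  have := sqrt_coef Hs (i := 0) ltac:(lia) gap.
  rewrite addr0 polyL_nat coefD !coefXn eqxx (_ : (d == 2 * d)%N = false) ?add0r; last first.
    by apply/eqP; lia.
  move=> E; have E2 : s 0 = (s 0 + s 0) / 2 by field.
  by rewrite E2 -E mul1r.
move=> i Hi; rewrite coefD coefXn coefC.
have [Hlt|Hgt|->] := ltgtP i d%:Z.
- rewrite (_ : _ == d = false); last by apply/eqP; lia.
  have [->|i0] := eqVneq i 0; first by rewrite S0 add0r.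
  by rewrite (_ : _ == 0%N = false) ?addr0; [apply: gap; lia | apply/eqP; lia].
- rewrite (_ : _ == d = false); last by apply/eqP; lia.
  by rewrite (_ : _ == 0%N = false) ?Ds ?addr0 //; apply/eqP; lia.
- by rewrite Sd eqxx (_ : d == 0%N = false) ?addr0 //; apply/eqP; lia.
Qed.

Lemma cf_sqrt_X2d_Xd d s alpha a h : (0 < d)%N -> is_sqrt ('X^(2 * d) + 'X^d) d s ->
  cf_expansion s alpha a -> (size (a h)).-1 = d.
Proof.
move=> hd Hs Hcf; have [Ls [HD _]] := Hs; set A : {poly rat} := 'X^d + (2^-1)%:P.
have c0 : - 4%:R^-1 != 0 :> rat by rewrite oppr_eq0 invr_eq0.
have Hnorm : is_prod (subL s (polyL A)) (addL s (polyL A)) (polyL ((- 4%:R^-1) *: 'X^0)).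
  have -> : (- 4%:R^-1) *: 'X^0 = 'X^(2 * d) + 'X^d - A * A :> {poly rat}.
    set t : {poly rat} := 'X^d; set half : {poly rat} := (2^-1)%:P.
    have E2 : half + half = 1 by rewrite -polyCD; congr (_%:P); field.
    have E4 : half * half = (4%:R^-1)%:P by rewrite -polyCM; congr (_%:P); field.
    rewrite /A -/t -/half (_ : 'X^(2 * d) = t * t); last by rewrite -exprD addnn mul2n.
    rewrite (_ : _ - _ = - (half * half) + t * (1 - (half + half))); last by ring.
    by rewrite E2 subrr mulr0 addr0 E4 expr0 alg_polyC polyCN.
  exact: is_prod_diff_sq Ls HD.
have Ha1 n : polyL ((-8%:R) *: A) n = (- 4%:R^-1)^-1 * (2 * polyL A (n + 0%N%:Z)).
  by rewrite polyLZ /scaleL addr0 invrN invrK; ring.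
have sA : size A = d.+1.
  rewrite /A size_polyDl ?size_polyXn //.
  by apply: (leq_ltn_trans (size_polyC_leq1 _)); rewrite ltnS.
have [_ ->] := cf_expansion_periodic Ls (sqrt_X2d_Xd_floor hd Hs) c0 Hnorm Ha1 Hcf h.
rewrite /period_quot; case: eqP => [_|_]; first by rewrite sA.
by case: ifP => _; rewrite size_scale ?sA // oppr_eq0.
Qed.

Unset Implicit Arguments.

Theorem theorem3 (d : nat) (hd : (0 < d)%N) :
  (forall e : nat, (e < d)%N ->
     forall (s : laurent) (alpha : nat -> laurent) (a : nat -> {poly rat}),
       is_sqrt ('X^(2 * d) + 'X^e) d s -> cf_expansion s alpha a ->
       (forall h : nat,
          (size (a h)).-1 = (if ~~ odd h then d else (d - e)%N)) /\
       lagrange_eq s d%:Z)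
  /\
  (forall (s : laurent) (alpha : nat -> laurent) (a : nat -> {poly rat}),
       is_sqrt ('X^(2 * d) + 'X^d) d s -> cf_expansion s alpha a ->
       (forall h : nat, (size (a h)).-1 = d) /\
       lagrange_eq s d%:Z).
Proof.
split=> [e he s alpha a Hs Hcf | s alpha a Hs Hcf].
  split=> [h|]; first exact: (cf_sqrt_X2d_Xe Hs h he Hcf).
  exact: (lagrange_sqrt_X2d_Xe Hs hd (ltnW he) Hcf).
split=> [h|]; first exact: (cf_sqrt_X2d_Xd h hd Hs Hcf).
exact: (lagrange_sqrt_X2d_Xe Hs hd (leqnn d) Hcf).
Qed.
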